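(* Let $m\in\mathbb{N}$ and $\beta\in(1,m+1]$. Suppose that for every $x\in(0,\frac{m}{\beta-1})$ there exist $n\ge0$ and maps $a_1,\ldots,a_n\in\{T_{\beta,0},\ldots,T_{\beta,m}\}$ such that $(a_j\circ\cdots\circ a_1)(x)\in I_{\beta,m}$ for all $1\le j\le n$ and $(a_n\circ\cdots\circ a_1)(x)$ lies in the interior of some choice interval. Then $\Omega_{\beta,m}(x)$ is uncountable for every $x\in(0,\frac{m}{\beta-1})$.
   Context: $I_{\beta,m}=[0,\frac{m}{\beta-1}]$ and $T_{\beta,i}(x)=\beta x-i$ for $i\in\{0,\ldots,m\}$. $\Omega_{\beta,m}(x)$ is the set of sequences $(a_i)_{i=1}^\infty\in\{T_{\beta,0},\ldots,T_{\beta,m}\}^{\mathbb{N}}$ with $(a_n\circ\cdots\circ a_1)(x)\in I_{\beta,m}$ for all $n\in\mathbb{N}$. For $i\in\{1,\ldots,m\}$ the $i$-th choice interval is $[\frac{i}{\beta},\frac{(i-1)\beta+m-(i-1)}{\beta(\beta-1)}]$. *)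

From Stdlib Require Import Reals.
Open Scope R_scope.

(* A map T_{beta,i}(x) = beta x - i is encoded by its index i : nat
   (distinct indices give distinct maps since beta > 1, so this is a faithful
   encoding of {T_{beta,0},...,T_{beta,m}}). *)
Definition T (beta : R) (i : nat) (x : R) : R := beta * x - INR i.

Definition in_I (beta : R) (m : nat) (y : R) : Prop :=
  0 <= y <= INR m / (beta - 1).

(* orbit beta a x n = (a_n o ... o a_1)(x), where a_{k+1} is encoded by a k;
   orbit beta a x 0 = x. *)
Fixpoint orbit (beta : R) (a : nat -> nat) (x : R) (n : nat) : R :=
  match n with
  | O => x
  | S k => T beta (a k) (orbit beta a x k)
  end.

Definition Omega (beta : R) (m : nat) (x : R) : (nat -> nat) -> Prop :=
  fun a => (forall k, (a k <= m)%nat) /\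
           (forall n, (1 <= n)%nat -> in_I beta m (orbit beta a x n)).

Definition in_choice_interior (beta : R) (m i : nat) (y : R) : Prop :=
  (1 <= i <= m)%nat /\
  INR i / beta < y < ((INR i - 1) * beta + INR m - (INR i - 1)) / (beta * (beta - 1)).

(* A set of sequences is countable if some sequence of sequences enumerates
   it (this includes finite and empty sets). *)
Definition countable_set (S : (nat -> nat) -> Prop) : Prop :=
  exists f : nat -> (nat -> nat), forall a, S a -> exists k, f k = a.

Definition uncountable_set (S : (nat -> nat) -> Prop) : Prop := ~ countable_set S.

From Stdlib Require Import Reals Lra Lia ClassicalEpsilon.
Open Scope R_scope.

(* If y lies in the interior of the i-th choice interval, both T_i y and T_{i-1} y
   stay in the open interval (0, m/(beta-1)), so from there the hypothesis again
   leads to a choice interval.  Following the hypothesis between choices and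
   branching at each choice gives a tree of admissible sequences.  Against an
   enumeration f of Omega we walk down this tree diagonally: at the k-th branching
   point, reached at time q, we take the branch whose symbol differs from f k q.
   The resulting sequence is in Omega but differs from every f k. *)

Lemma lt_div_of_mul_lt (a b c : R) : 0 < c -> a * c < b -> a < b / c.
Proof.
  intros Hc H. apply (Rmult_lt_reg_r c); [exact Hc|].
  replace (b / c * c) with b by (field; lra). exact H.
Qed.

Lemma orbit_shift (beta : R) (w : nat -> nat) (y : R) (j : nat) :
  orbit beta (fun t => w (S t)) (T beta (w 0%nat) y) j = orbit beta w y (S j).
Proof. induction j as [|j IH]; simpl; [reflexivity | now rewrite IH]. Qed.

Lemma choose_on (A B : Type) (b0 : B) (D : A -> Prop) (P : A -> B -> Prop) :
  (forall y, D y -> exists b, P y b) -> exists g : A -> B, forall y, D y -> P y (g y).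
Proof.
  intros H. exists (fun y => epsilon (inhabits b0) (P y)).
  intros y Hy. apply epsilon_spec. exact (H y Hy).
Qed.

Section Choice_intervals.
Variables (m : nat) (beta : R).
Hypothesis beta_gt_1 : 1 < beta.

Definition in_open_I (y : R) : Prop := 0 < y < INR m / (beta - 1).

Lemma in_open_I_in_I (y : R) : in_open_I y -> in_I beta m y.
Proof. unfold in_open_I, in_I. lra. Qed.

Lemma choice_interior_maps_into_open_I (i : nat) (y : R) :
  in_choice_interior beta m i y ->
  in_open_I (T beta i y) /\ in_open_I (T beta (i - 1) y).
Proof.
  intros [Hi [Hlo Hhi]]. unfold in_open_I, T.
  rewrite minus_INR by lia. simpl INR.
  assert (Hb : 0 < beta - 1) by lra.
  assert (Hlow : INR i < beta * y).
  { replace (INR i) with (beta * (INR i / beta)) by (field; lra).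
    apply Rmult_lt_compat_l; lra. }
  assert (Hhigh : (beta * y - (INR i - 1)) * (beta - 1) < INR m).
  { assert (Hprod : beta * (beta - 1) * y <
                    (INR i - 1) * beta + INR m - (INR i - 1)).
    { replace ((INR i - 1) * beta + INR m - (INR i - 1)) with
        (beta * (beta - 1) * (((INR i - 1) * beta + INR m - (INR i - 1))
                              / (beta * (beta - 1)))) by (field; lra).
      apply Rmult_lt_compat_l; [nra | exact Hhi]. }
    nra. }
  assert (Hi1 : (beta * y - INR i) * (beta - 1) < INR m) by nra.
  split; split; try lra; apply lt_div_of_mul_lt; assumption.
Qed.

Definition choice_path (y : R) (n : nat) (w : nat -> nat) (i : nat) : Prop :=
  (forall k, (k < n)%nat -> (w k <= m)%nat) /\
  (forall j, (1 <= j <= n)%nat -> in_I beta m (orbit beta w y j)) /\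
  in_choice_interior beta m i (orbit beta w y n).

Lemma choice_path_shift (y : R) (r : nat) (w : nat -> nat) (i : nat) :
  choice_path y (S r) w i ->
  in_I beta m (T beta (w 0%nat) y) /\
  choice_path (T beta (w 0%nat) y) r (fun t => w (S t)) i.
Proof.
  intros [Hw [HI Hc]]. split; [apply (HI 1%nat); lia|].
  split; [|split].
  - intros k Hk. apply Hw. lia.
  - intros j Hj. rewrite orbit_shift. apply HI. lia.
  - rewrite orbit_shift. exact Hc.
Qed.

End Choice_intervals.

Record plan := Plan { plan_length : nat; plan_word : nat -> nat; plan_target : nat }.

(* From [pos], the [pending] remaining symbols of [word] lead into the interior of
   the [target]-th choice interval; [round] counts the branchings made so far. *)
Record state := State { pos : R; pending : nat; word : nat -> nat; target : nat; round : nat }.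

Section Diagonal.
Variables (m : nat) (beta : R).
Hypothesis beta_gt_1 : 1 < beta.
Variable p : R -> plan.
Hypothesis p_spec : forall y, in_open_I m beta y ->
  choice_path m beta y (plan_length (p y)) (plan_word (p y)) (plan_target (p y)).
Variables (f : nat -> nat -> nat) (x : R).
Hypothesis x_open : in_open_I m beta x.

Definition start (y : R) (k : nat) : state :=
  State y (plan_length (p y)) (plan_word (p y)) (plan_target (p y)) k.

Definition avoid (q k i : nat) : nat := if Nat.eqb i (f k q) then (i - 1)%nat else i.

Definition symbol (q : nat) (s : state) : nat :=
  match pending s with
  | O => avoid q (round s) (target s)
  | S _ => word s 0%nat
  end.

Definition step (q : nat) (s : state) : state :=
  let z := T beta (symbol q s) (pos s) in
  match pending s with
  | O => start z (S (round s))
  | S r => State z r (fun t => word s (S t)) (target s) (round s)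
  end.

Fixpoint states (q : nat) : state :=
  match q with
  | O => start x 0
  | S q => step q (states q)
  end.

Definition diagonal (q : nat) : nat := symbol q (states q).

Lemma avoid_cases (q k i : nat) : avoid q k i = i \/ avoid q k i = (i - 1)%nat.
Proof. unfold avoid. destruct (Nat.eqb i (f k q)); auto. Qed.

Lemma avoid_neq (q k i : nat) : (1 <= i)%nat -> avoid q k i <> f k q.
Proof.
  intros Hi. unfold avoid. destruct (Nat.eqb i (f k q)) eqn:E.
  - apply Nat.eqb_eq in E. lia.
  - now apply Nat.eqb_neq in E.
Qed.

Definition well_placed (s : state) : Prop :=
  in_I beta m (pos s) /\ choice_path m beta (pos s) (pending s) (word s) (target s).

Lemma start_well_placed (y : R) (k : nat) : in_open_I m beta y -> well_placed (start y k).
Proof. intros Hy. split; [apply in_open_I_in_I | apply p_spec]; exact Hy. Qed.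

Lemma step_well_placed (q : nat) (s : state) : well_placed s -> well_placed (step q s).
Proof.
  intros [_ Hpath]. unfold step, symbol. destruct (pending s) as [|r].
  - destruct Hpath as [_ [_ Hc]].
    destruct (choice_interior_maps_into_open_I m beta beta_gt_1 _ _ Hc) as [Hi Hi1].
    apply start_well_placed.
    destruct (avoid_cases q (round s) (target s)) as [-> | ->]; assumption.
  - exact (choice_path_shift m beta _ _ _ _ Hpath).
Qed.

Lemma states_well_placed (q : nat) : well_placed (states q).
Proof.
  induction q as [|q IH]; simpl.
  - now apply start_well_placed.
  - now apply step_well_placed.
Qed.

Lemma pos_step (q : nat) (s : state) : pos (step q s) = T beta (symbol q s) (pos s).
Proof. unfold step. now destruct (pending s). Qed.

Lemma orbit_diagonal (q : nat) : orbit beta diagonal x q = pos (states q).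
Proof.
  induction q as [|q IH]; [reflexivity|].
  simpl. rewrite IH, pos_step. reflexivity.
Qed.

Lemma diagonal_le (q : nat) : (diagonal q <= m)%nat.
Proof.
  destruct (states_well_placed q) as [_ [Hw [_ [Hi _]]]].
  unfold diagonal, symbol. destruct (pending (states q)) as [|r].
  - destruct (avoid_cases q (round (states q)) (target (states q))) as [-> | ->]; lia.
  - apply Hw. lia.
Qed.

Lemma diagonal_in_Omega : Omega beta m x diagonal.
Proof.
  split; [exact diagonal_le|].
  intros n _. rewrite orbit_diagonal. apply states_well_placed.
Qed.

Lemma pending_exhausted (d q : nat) : pending (states q) = d ->
  exists q', round (states q') = round (states q) /\ pending (states q') = 0%nat.
Proof.
  revert q. induction d as [|d IH]; intros q Hq; [now exists q|].
  assert (Hnext : pending (states (S q)) = d /\ round (states (S q)) = round (states q)).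
  { simpl. unfold step. now rewrite Hq. }
  destruct Hnext as [Hd Hr].
  destruct (IH (S q) Hd) as [q' [Hr' H0]]. exists q'. split; [congruence | exact H0].
Qed.

Lemma every_round_reached (k : nat) :
  exists q, round (states q) = k /\ pending (states q) = 0%nat.
Proof.
  induction k as [|k [q [Hr H0]]].
  - exact (pending_exhausted _ 0 eq_refl).
  - destruct (pending_exhausted _ (S q) eq_refl) as [q' [Hr' H0']].
    exists q'. split; [|exact H0'].
    rewrite Hr'. simpl. unfold step. now rewrite H0, Hr.
Qed.

Lemma diagonal_neq (k : nat) : diagonal <> f k.
Proof.
  intros Hk. destruct (every_round_reached k) as [q [Hr H0]].
  destruct (states_well_placed q) as [_ [_ [_ [Hi _]]]].
  apply (avoid_neq q k (target (states q))); [lia|].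
  rewrite <- Hk. unfold diagonal, symbol. now rewrite H0, Hr.
Qed.

End Diagonal.

Theorem proposition2p3 (m : nat) (beta : R) :
  1 < beta <= INR m + 1 ->
  (forall x : R, 0 < x < INR m / (beta - 1) ->
     exists (n : nat) (a : nat -> nat),
       (forall k, (k < n)%nat -> (a k <= m)%nat) /\
       (forall j, (1 <= j <= n)%nat -> in_I beta m (orbit beta a x j)) /\
       exists i : nat, in_choice_interior beta m i (orbit beta a x n)) ->
  forall x : R, 0 < x < INR m / (beta - 1) -> uncountable_set (Omega beta m x).
Proof.
  intros [Hb _] Hreach x Hx [f Hf].
  destruct (choose_on R plan (Plan 0 (fun _ => 0%nat) 0) (in_open_I m beta)
              (fun y pl => choice_path m beta y (plan_length pl) (plan_word pl)
                                       (plan_target pl))) as [p Hp].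
  { intros y Hy. destruct (Hreach y Hy) as (n & w & Hw & HI & i & Hc).
    exists (Plan n w i). exact (conj Hw (conj HI Hc)). }
  destruct (Hf _ (diagonal_in_Omega m beta Hb p Hp f x Hx)) as [k Hk].
  exact (diagonal_neq m beta Hb p Hp f x Hx k (eq_sym Hk)).
Qed.
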